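(* Let $\varphi$ be a finite conjunction of literals of the two forms $x\in y$ and $x = y\setminus z$ (with $x,y,z$ set variables), with finite set of variables $\mathrm{Vars}(\varphi)$. Let $M$ be a set assignment over $\mathrm{Vars}(\varphi)$ satisfying $\varphi$; let $\bar x,\bar y\in\mathrm{Vars}(\varphi)$, let $\overline{M}$ be a set assignment over $\mathrm{Vars}(\varphi)$ satisfying $\varphi$ with $\overline{M}\bar x\neq \overline{M}\bar y$, and let $\mathfrak{t}$ be a set belonging to exactly one of $\overline{M}\bar x$, $\overline{M}\bar y$. Fix a set $\mathfrak{s}$ with $\mathrm{rk}(\mathfrak{s})>\mathrm{rk}(M)$. Define $\mathsf{V}_0=\{u\in\mathrm{Vars}(\varphi)\mid \mathfrak{t}\in\overline{M}u\}$; $\mathsf{V}_n=\{u\in\mathrm{Vars}(\varphi)\mid Mu\cap\{Mw\mid w\in\mathsf{V}_{n-1}\}\neq\emptyset\}$ for $n\ge1$; $M_0v=Mv\cup\{\mathfrak{s}\}$ if $v\in\mathsf{V}_0$ and $M_0v=Mv$ otherwise; for $n\ge1$, $M_nv=M_{n-1}v\cup\{M_{n-1}u\mid u\in\mathsf{V}_{n-1},\ Mu\in Mv\}$ if $v\in\mathsf{V}_n$ and $M_nv=M_{n-1}v$ otherwise. Then for all $x\in\mathrm{Vars}(\varphi)$, $n\in\mathbb{N}$ and every set $\mathfrak{q}\in M_nx$, if $\mathrm{rk}(\mathfrak{q})<\mathrm{rk}(\mathfrak{s})$ then $\mathfrak{q}\in Mx$.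
   Context: A set assignment is a map from a finite set of set variables into the von Neumann universe $\mathcal{V}=\bigcup_\alpha\mathcal{V}_\alpha$, $\mathcal{V}_\alpha=\bigcup_{\beta<\alpha}\mathcal{P}(\mathcal{V}_\beta)$; it satisfies $x\in y$ iff $Mx\in My$ and $x=y\setminus z$ iff $Mx=My\setminus Mz$. The rank $\mathrm{rk}(s)$ of a set $s$ is the least ordinal $\alpha$ with $s\subseteq\mathcal{V}_\alpha$, and $\mathrm{rk}(M)=\max\{\mathrm{rk}(Mx)\mid x\in\mathrm{dom}(M)\}$. *)

(* Sets are modelled by Aczel's well-founded trees
   (a type-theoretic model of the cumulative hierarchy), with
   extensional equality EQ and membership IN. *)
From Stdlib Require Import List ClassicalEpsilon.
Import ListNotations.

Inductive Ens : Type := sup (A : Type) (f : A -> Ens).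

Definition idx (x : Ens) : Type := match x with sup A _ => A end.
Definition elt (x : Ens) : idx x -> Ens := match x with sup _ f => f end.

Fixpoint EQ (x y : Ens) : Prop :=
  match x, y with
  | sup A f, sup B g =>
      (forall a, exists b, EQ (f a) (g b)) /\ (forall b, exists a, EQ (f a) (g b))
  end.

Definition IN (x y : Ens) : Prop := exists b : idx y, EQ x (elt y b).

Definition singleton (x : Ens) : Ens := sup unit (fun _ => x).
Definition union (x y : Ens) : Ens :=
  sup (idx x + idx y)%type
      (fun p => match p with inl a => elt x a | inr b => elt y b end).
Definition setdiff (x y : Ens) : Ens :=
  sup {a : idx x | ~ IN (elt x a) y} (fun p => elt x (proj1_sig p)).
Definition succ (x : Ens) : Ens := union x (singleton x).

(* von Neumann rank, as a von Neumann ordinal: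
   rk(s) = sup { rk(t) + 1 | t in s } = U_{t in s} succ (rk t).
   Ordinal comparison rk(q) < rk(s) is membership IN (rk q) (rk s). *)
Fixpoint rk (x : Ens) : Ens :=
  match x with
  | sup A f =>
      sup {a : A & idx (succ (rk (f a)))}
          (fun p => elt (succ (rk (f (projT1 p)))) (projT2 p))
  end.

Definition rk_lt (x y : Ens) : Prop := IN (rk x) (rk y).

Inductive lit (V : Type) : Type :=
| LIn : V -> V -> lit V
| LDiff : V -> V -> V -> lit V.
Arguments LIn {V} _ _.
Arguments LDiff {V} _ _ _.

Definition formula (V : Type) := list (lit V).

Definition lit_vars {V} (l : lit V) : list V :=
  match l with LIn x y => [x; y] | LDiff x y z => [x; y; z] end.

Definition occurs {V} (v : V) (phi : formula V) : Prop :=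
  exists l, In l phi /\ In v (lit_vars l).

Definition sat_lit {V} (M : V -> Ens) (l : lit V) : Prop :=
  match l with
  | LIn x y => IN (M x) (M y)
  | LDiff x y z => EQ (M x) (setdiff (M y) (M z))
  end.

Definition sat {V} (M : V -> Ens) (phi : formula V) : Prop :=
  forall l, In l phi -> sat_lit M l.

Fixpoint Vset {V} (M Mbar : V -> Ens) (t : Ens) (n : nat) (u : V) : Prop :=
  match n with
  | 0 => IN t (Mbar u)
  | S m => exists a, IN a (M u) /\ exists w, Vset M Mbar t m w /\ EQ a (M w)
  end.

Definition family {V} (P : V -> Prop) (F : V -> Ens) : Ens :=
  sup {u : V | P u} (fun p => F (proj1_sig p)).

Fixpoint Mn {V} (M Mbar : V -> Ens) (t s : Ens) (n : nat) (v : V) : Ens :=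
  match n with
  | 0 => if excluded_middle_informative (Vset M Mbar t 0 v)
         then union (M v) (singleton s) else M v
  | S m => if excluded_middle_informative (Vset M Mbar t (S m) v)
           then union (Mn M Mbar t s m v)
                      (family (fun u => Vset M Mbar t m u /\ IN (M u) (M v))
                              (fun u => Mn M Mbar t s m u))
           else Mn M Mbar t s m v
  end.

(* Every element of M_n x that is not already an element of M x "reaches" s,
   i.e. is s itself or has s in its transitive closure.  This is proved by
   induction on n: a set M_{n-1} u added to M_n v either contains an element
   reaching s, or, by induction, has exactly the elements of M u and is then
   already in M v because M u is.  A set reaching s has rank at least rk(s),
   so an element of rank below rk(s) lies in M x. *)

From Stdlib Require Import List Classical ClassicalEpsilon.

Lemma EQ_refl (x : Ens) : EQ x x.
Proof. induction x as [A f IH]; simpl; split; intros a; exists a; apply IH. Qed.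

Lemma EQ_sym (x y : Ens) : EQ x y -> EQ y x.
Proof.
  revert y; induction x as [A f IH]; intros [B g] [H1 H2]; simpl; split.
  - intros b; destruct (H2 b) as [a Ha]; exists a; apply IH, Ha.
  - intros a; destruct (H1 a) as [b Hb]; exists b; apply IH, Hb.
Qed.

Lemma EQ_trans (x y z : Ens) : EQ x y -> EQ y z -> EQ x z.
Proof.
  revert y z; induction x as [A f IH]; intros [B g] [C h] [H1 H2] [H3 H4]; simpl; split.
  - intros a; destruct (H1 a) as [b Hb]; destruct (H3 b) as [c Hc]; exists c; eauto.
  - intros c; destruct (H4 c) as [b Hb]; destruct (H2 b) as [a Ha]; exists a; eauto.
Qed.

Lemma IN_EQ_r (z x y : Ens) : IN z x -> EQ x y -> IN z y.
Proof.
  destruct x as [A f], y as [B g]; intros [a Ha] [H1 _]; simpl in *.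
  destruct (H1 a) as [b Hb]; exists b; eapply EQ_trans; eauto.
Qed.

Lemma IN_EQ_l (z z' x : Ens) : IN z x -> EQ z z' -> IN z' x.
Proof. intros [a Ha] E; exists a; eapply EQ_trans; [apply EQ_sym, E | exact Ha]. Qed.

Lemma EQ_ext (x y : Ens) :
  (forall z, IN z x -> IN z y) -> (forall z, IN z y -> IN z x) -> EQ x y.
Proof.
  destruct x as [A f], y as [B g]; intros Hxy Hyx; simpl; split.
  - intros a; destruct (Hxy (f a)) as [b Hb]; [exists a; apply EQ_refl |].
    exists b; exact Hb.
  - intros b; destruct (Hyx (g b)) as [a Ha]; [exists b; apply EQ_refl |].
    exists a; apply EQ_sym, Ha.
Qed.

Lemma IN_union (z x y : Ens) : IN z (union x y) <-> IN z x \/ IN z y.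
Proof.
  split.
  - intros [[a | b] H]; [left | right]; eexists; exact H.
  - intros [[a H] | [b H]]; [exists (inl a) | exists (inr b)]; exact H.
Qed.

Lemma IN_singleton (z x : Ens) : IN z (singleton x) <-> EQ z x.
Proof. split; [intros [[] H]; exact H | intros H; exists tt; exact H]. Qed.

Lemma IN_succ (z x : Ens) : IN z (succ x) <-> IN z x \/ EQ z x.
Proof. unfold succ; rewrite IN_union, IN_singleton; tauto. Qed.

Lemma IN_family {V : Type} (P : V -> Prop) (F : V -> Ens) (z : Ens) :
  IN z (family P F) <-> exists u, P u /\ EQ z (F u).
Proof.
  split.
  - intros [[u Hu] H]; exists u; split; assumption.
  - intros [u [Hu H]]; exists (exist _ u Hu); exact H.
Qed.

Lemma IN_rk (z : Ens) (A : Type) (f : A -> Ens) :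
  IN z (rk (sup A f)) <-> exists a, IN z (succ (rk (f a))).
Proof.
  split.
  - intros [[a c] H]; exists a, c; exact H.
  - intros [a [c H]]; exists (existT _ a c); exact H.
Qed.

Lemma IN_wf : well_founded IN.
Proof.
  assert (Acc_EQ : forall x y, EQ y x -> Acc IN y).
  { induction x as [A f IH]; intros y Hy; constructor; intros z Hz.
    destruct (IN_EQ_r _ _ _ Hz Hy) as [a Ha]; exact (IH a z Ha). }
  intros x; exact (Acc_EQ x x (EQ_refl x)).
Qed.

Lemma IN_irrefl (x : Ens) : ~ IN x x.
Proof.
  induction (IN_wf x) as [x _ IH]; intros H; exact (IH x H H).
Qed.

Lemma IN_asym (x y : Ens) : IN x y -> ~ IN y x.
Proof.
  revert y; induction (IN_wf x) as [x _ IH]; intros y Hxy Hyx.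
  exact (IH y Hyx x Hyx Hxy).
Qed.

Lemma rk_EQ (x y : Ens) : EQ x y -> EQ (rk x) (rk y).
Proof.
  revert y; induction x as [A f IH]; intros [B g] Hxy; destruct Hxy as [H1 H2].
  apply EQ_ext; intros z Hz; rewrite IN_rk in *; destruct Hz as [a Ha];
    rewrite IN_succ in Ha.
  - destruct (H1 a) as [b Hb]; exists b; rewrite IN_succ.
    pose proof (IH a _ Hb) as E; destruct Ha as [Ha | Ha].
    + left; eapply IN_EQ_r; eauto.
    + right; eapply EQ_trans; eauto.
  - destruct (H2 a) as [b Hb]; exists b; rewrite IN_succ.
    pose proof (EQ_sym _ _ (IH b _ Hb)) as E; destruct Ha as [Ha | Ha].
    + left; eapply IN_EQ_r; eauto.
    + right; eapply EQ_trans; eauto.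
Qed.

Lemma rk_IN (r q : Ens) : IN r q -> IN (rk r) (rk q).
Proof.
  destruct q as [A f]; intros [a Ha]; simpl in Ha.
  rewrite IN_rk; exists a; rewrite IN_succ; right; apply rk_EQ, Ha.
Qed.

Lemma rk_sub_IN (r q : Ens) : IN r q -> forall z, IN z (rk r) -> IN z (rk q).
Proof.
  destruct q as [A f]; intros [a Ha] z Hz; simpl in Ha.
  rewrite IN_rk; exists a; rewrite IN_succ; left.
  eapply IN_EQ_r; [exact Hz | apply rk_EQ, Ha].
Qed.

Inductive reaches (s : Ens) : Ens -> Prop :=
| reaches_EQ q : EQ q s -> reaches s q
| reaches_IN q r : IN r q -> reaches s r -> reaches s q.

Lemma reaches_rk (s q : Ens) : reaches s q -> EQ (rk q) (rk s) \/ IN (rk s) (rk q).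
Proof.
  induction 1 as [q E | q r Hr _ IH].
  - left; apply rk_EQ, E.
  - right; destruct IH as [IH | IH].
    + eapply IN_EQ_l; [apply rk_IN, Hr | exact IH].
    + eapply rk_sub_IN; eauto.
Qed.

Lemma reaches_not_rk_lt (s q : Ens) : reaches s q -> ~ rk_lt q s.
Proof.
  unfold rk_lt; intros H L; destruct (reaches_rk _ _ H) as [E | I].
  - apply (IN_irrefl (rk s)); eapply IN_EQ_l; eauto.
  - exact (IN_asym _ _ L I).
Qed.

Section Construction.

Variables (V : Type) (M Mbar : V -> Ens) (t s : Ens).

Lemma M_sub_Mn (n : nat) (x : V) (z : Ens) : IN z (M x) -> IN z (Mn M Mbar t s n x).
Proof.
  intros H; induction n; simpl; destruct (excluded_middle_informative _);
    rewrite ?IN_union; auto.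
Qed.

Lemma Mn_EQ_M (n : nat) (u : V) :
  (forall r, IN r (Mn M Mbar t s n u) -> IN r (M u) \/ reaches s r) ->
  ~ (exists r, IN r (Mn M Mbar t s n u) /\ reaches s r) ->
  EQ (Mn M Mbar t s n u) (M u).
Proof.
  intros Hel Hclean; apply EQ_ext; intros z Hz.
  - destruct (Hel z Hz) as [H | H]; [exact H | exfalso; eauto].
  - apply M_sub_Mn, Hz.
Qed.

Lemma IN_Mn (n : nat) (x : V) (q : Ens) :
  IN q (Mn M Mbar t s n x) -> IN q (M x) \/ reaches s q.
Proof.
  revert x q; induction n as [| m IH]; intros x q H; simpl in H;
    destruct (excluded_middle_informative _); auto.
  - rewrite IN_union, IN_singleton in H; destruct H as [H | H]; auto.
    right; apply reaches_EQ, H.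
  - rewrite IN_union, IN_family in H; destruct H as [H | [u [[_ Hu] E]]]; auto.
    destruct (classic (exists r, IN r (Mn M Mbar t s m u) /\ reaches s r))
      as [[r [Hr Hrs]] | Hclean].
    + right; apply (reaches_IN _ _ r); [| exact Hrs].
      eapply IN_EQ_r; [exact Hr | apply EQ_sym, E].
    + left; eapply IN_EQ_l; [exact Hu |].
      apply EQ_sym; eapply EQ_trans; [exact E | apply Mn_EQ_M; auto].
Qed.

End Construction.

Theorem lemma7 (V : Type) (phi : formula V)
  (Hvars : forall v : V, occurs v phi)
  (M : V -> Ens) (HM : sat M phi)
  (xb yb : V) (Mbar : V -> Ens) (HMbar : sat Mbar phi)
  (Hneq : ~ EQ (Mbar xb) (Mbar yb))
  (t : Ens)
  (Ht : (IN t (Mbar xb) /\ ~ IN t (Mbar yb)) \/ (~ IN t (Mbar xb) /\ IN t (Mbar yb)))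
  (s : Ens) (Hs : forall v : V, rk_lt (M v) s) :
  forall (x : V) (n : nat) (q : Ens),
    IN q (Mn M Mbar t s n x) -> rk_lt q s -> IN q (M x).
Proof.
  intros x n q Hq Hlt.
  destruct (IN_Mn V M Mbar t s n x q Hq) as [H | H]; [exact H |].
  exfalso; exact (reaches_not_rk_lt s q H Hlt).
Qed.
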